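(* Let $m\ge3$ be odd, $s$ a positive integer, $n=sm$, and $\Gamma=C_n[mK_1]$. For $i\in\{2,\dots,n\}$ let $\ell_i=1+\frac{(i-2)(i-1)}{2}$, and let $\sigma_1=(c,1,\dots,1)r$, $\sigma_2=(t,tc^{\ell_2},tc^{\ell_3},\dots,tc^{\ell_n})z$ and $G=\langle\sigma_1,\sigma_2\rangle$. Then $\Gamma$ is the skeleton of a polytopal chiral map $\mathcal M$ of type $\{mn,2m\}$ with $\mathrm{Aut}(\mathcal M)=\mathrm{Aut}^+(\mathcal M)=G$.
   Context: $C_n[mK_1]$ is the graph with vertex set $\{1,\dots,n\}\times\{1,\dots,m\}$ in which $(i_1,j_1)$ is adjacent to $(i_2,j_2)$ if and only if $i_1\equiv i_2\pm1\pmod n$ (residues mod $n$ taken in $\{1,\dots,n\}$). Permutations act on the right ($x\alpha$ is the image of $x$) and products are composed left to right, both in $S_m$ and in $\mathrm{Aut}(\Gamma)$. For $\alpha_1,\dots,\alpha_n\in S_m$ and a permutation $x$ of $\{1,\dots,n\}$ in the dihedral group $D_n=\langle r,z\rangle$, $(\alpha_1,\dots,\alpha_n)x$ denotes the automorphism of $\Gamma$ mapping $(i,j)\mapsto(ix,\,j\alpha_i)$; $1$ denotes an identity permutation. Here $c=(1\,2\,\cdots\,m)\in S_m$; $t\in S_m$ fixes $1$ and maps $j\mapsto m-j+2$ for $2\le j\le m$; $r$ is the permutation $i\mapsto i+1 \pmod n$ of $\{1,\dots,n\}$; and $z$ fixes $1$ and maps $j\mapsto n-j+2$ for $2\le j\le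 n$. A map is a finite connected graph (its skeleton), viewed as a 1-dimensional CW complex, embedded in a closed surface so that every connected component of the complement (a face) is homeomorphic to an open disk. The map is polytopal if the boundary of each face is a cycle of the skeleton and every edge lies on the boundary of exactly two distinct faces. An automorphism of a map is an automorphism of the skeleton that extends to a homeomorphism of the surface; these form the group $\mathrm{Aut}(\mathcal M)$. A map is rotary if the stabiliser of each vertex contains a cyclic group acting transitively on the edges incident to it, and the stabiliser of each face contains a cyclic group acting transitively on the vertices (and edges) of the face; it has type $\{p,q\}$ if each face has $p$ edges on its boundary and the skeleton is $q$-valent. A rotary map is reflexible if the stabiliser of a face also contains an automorphism acting as a reflection of that face; a rotary map on an orientable surface that is not reflexible is chiral. For a polytopal rotary map and a flag (incident vertex–edge–face triple) $\Phi=(v,e,f)$, distinguished generators are automorphisms $\sigma_1,\sigma_2$ such that $\sigma_1$ preserves $f$ and acts as a one-step rotation of its boundary cycle, $\sigma_2$ fixes $v$ and acts as a one-step rotation of the edges around $v$, and $\sigma_1\sigma_2$ is an involution reversing $e$; the rotational group is $\mathrm{Aut}^+(\mathcal M)=\langle\sigma_1,\sigma_2\rangle$. *)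

From HB Require Import structures.
From mathcomp Require Import all_boot all_order all_algebra all_fingroup.
Set Implicit Arguments. Unset Strict Implicit. Unset Printing Implicit Defensive.
Import GRing.Theory.
Local Open Scope ring_scope.

(* Vertices of C_n[mK_1]: rows 'Z_n (paper row i  <->  i-1), columns 'Z_m
   (paper column j <-> j-1).  Only used for n, m >= 3. *)
Definition vtx (n m : nat) : finType := ('Z_n * 'Z_m)%type.

Definition adj n m : rel (vtx n m) :=
  fun x y => (y.1 == x.1 + 1) || (y.1 == x.1 - 1).

(* sigma1 = (c,1,...,1) r : (i,j) |-> (i+1, j + [i = first row]) *)
Definition sigma1_fun n m (x : vtx n m) : vtx n m :=
  (x.1 + 1, x.2 + (x.1 == 0)%:R).
Definition sigma1_inv n m (y : vtx n m) : vtx n m :=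
  (y.1 - 1, y.2 - (y.1 - 1 == 0)%:R).
Lemma sigma1_funK n m : cancel (@sigma1_fun n m) (@sigma1_inv n m).
Proof. by case=> i j; rewrite /sigma1_fun /sigma1_inv /= !addrK. Qed.
Definition sigma1 n m : {perm vtx n m} := perm (can_inj (@sigma1_funK n m)).

(* exponent of c in the row-(i+1) entry of sigma2: 0 for the first row
   (entry t), and l_{i+1} = 1 + (i-1)i/2 for 0-indexed row i >= 1 *)
Definition ell n m (i : 'Z_n) : 'Z_m :=
  if i == 0 then 0 else (1 + ((val i).-1 * val i) %/ 2)%N%:R.

(* sigma2 = (t, t c^{l_2}, ..., t c^{l_n}) z :
   (i,j) |-> (-i, -j + ell i)   (t : j |-> -j, c : j |-> j+1, z : i |-> -i) *)
Definition sigma2_fun n m (x : vtx n m) : vtx n m :=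
  (- x.1, - x.2 + ell m x.1).
Definition sigma2_inv n m (y : vtx n m) : vtx n m :=
  (- y.1, ell m (- y.1) - y.2).
Lemma sigma2_funK n m : cancel (@sigma2_fun n m) (@sigma2_inv n m).
Proof.
by case=> i j; rewrite /sigma2_fun /sigma2_inv /= opprK opprD opprK addrC addrNK.
Qed.
Definition sigma2 n m : {perm vtx n m} := perm (can_inj (@sigma2_funK n m)).

(* ---------- Maps on orientable surfaces, combinatorially ----------------
   An (orientable) map with skeleton Gamma is given by a rotation system:
   rot v w = the neighbour of v following w in the cyclic order around v. *)
Section Maps.
Variables (n m : nat).
Local Notation V := (vtx n m).
Implicit Types (rot : V -> V -> V) (d : V * V).

Definition dart d := adj d.1 d.2.

Definition is_rotation rot :=
  (forall v w, adj v w -> adj v (rot v w)) /\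
  (forall v w w', adj v w -> adj v w' -> exists k, iter k (rot v) w = w').

(* face-boundary successor of a dart: (u,v) |-> (v, rot v u);
   the faces are the orbits of darts under face_step *)
Definition face_step rot d : V * V := (d.2, rot d.2 d.1).

Definition in_face rot d : pred (V * V) := fconnect (face_step rot) d.

Definition face_edges rot d : {set {set V}} :=
  [set [set e.1; e.2] | e in in_face rot d].
Definition face_verts rot d : {set V} := [set e.1 | e in in_face rot d].

(* polytopal: every face boundary is a cycle (no repeated vertex, length
   >= 3), and every edge lies on two distinct faces *)
Definition polytopal rot :=
  (forall d, dart d ->
     (forall k, (iter k (face_step rot) d).1 = d.1 ->
                iter k (face_step rot) d = d)
     /\ (3 <= fingraph.order (face_step rot) d)%N) /\
  (forall d, dart d -> ~~ in_face rot d (d.2, d.1)).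

Definition map_type rot (p q : nat) :=
  (forall d, dart d -> fingraph.order (face_step rot) d = p) /\
  (forall v : V, #|[set w | adj v w]| = q).

(* map automorphism: skeleton automorphism permuting the faces, i.e.
   extending to a homeomorphism of the surface *)
Definition map_aut rot (a : {perm V}) :=
  (forall x y, adj (a x) (a y) = adj x y) /\
  (forall d, dart d -> exists2 d', dart d' &
       [set a @: (e : {set V}) | e in face_edges rot d] = face_edges rot d').

Definition face_stab rot d (a : {perm V}) :=
  [set a @: (e : {set V}) | e in face_edges rot d] = face_edges rot d.

Definition rotary rot :=
  (forall v : V, exists a, [/\ map_aut rot a, a v = v &
      forall w w', adj v w -> adj v w' -> exists k, (a ^+ k)%g w = w']) /\
  (forall d, dart d -> exists a, [/\ map_aut rot a, face_stab rot d a &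
      forall u w, u \in face_verts rot d -> w \in face_verts rot d ->
                  exists k, (a ^+ k)%g u = w]).

Definition face_reflection rot d (a : {perm V}) :=
  [/\ map_aut rot a, face_stab rot d a &
      forall e, in_face rot d e -> in_face rot d (a e.2, a e.1)].

Definition reflexible rot :=
  rotary rot /\ forall d, dart d -> exists a, face_reflection rot d a.

(* the surface is orientable by construction (rotation system) *)
Definition chiral rot := rotary rot /\ ~ reflexible rot.

(* distinguished generators for the flag (v, {v,w}, face of fd) *)
Definition distinguished rot (v w : V) (fd : V * V) (t1 t2 : {perm V}) :=
  [/\ adj v w, (fd = (v, w) \/ fd = (w, v)),
      [/\ map_aut rot t1, face_stab rot fd t1 &
          (forall e, in_face rot fd e -> t1 e.1 = e.2) \/
          (forall e, in_face rot fd e -> t1 e.2 = e.1)],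
      [/\ map_aut rot t2, t2 v = v &
          (forall u, adj v u -> t2 u = rot v u) \/
          (forall u, adj v u -> rot v (t2 u) = u)] &
      [/\ ((t1 * t2) ^+ 2 = 1)%g, (t1 * t2 != 1)%g, (t1 * t2)%g v = w & (t1 * t2)%g w = v]].

End Maps.

From HB Require Import structures.
From mathcomp Require Import all_boot all_order all_algebra all_fingroup.
From mathcomp Require Import ring zify.
Set Implicit Arguments. Unset Strict Implicit. Unset Printing Implicit Defensive.
Import GRing.Theory.
Local Open Scope ring_scope.

(* Label the vertex [(i, j)] of C_n[mK_1] ([0 <= i < n], [0 <= j < m]) by
   [i + n j - n [i != 0]] in [R = Z_N], [N = m n].  This is a bijection under which
   sigma1 becomes [x |-> x + 1] and sigma2 becomes [x |-> - x + c x (x - 1)], where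
   [c = n (m + 1) / 2] satisfies [2 c = n] and [c^2 = c n = n^2 = 0] in [R]; two
   vertices are adjacent iff their labels differ by [+-1] mod [n].  Rotate around [x]
   by sending [x + d] to [x - d] when [d = 1] mod [n] and to [x - d + n] when
   [d = -1] mod [n]: the square of this turn multiplies [d] by the unit [1 + n], so
   the rotation cycles through all [2 m] neighbours.  The face of the dart
   [(u, u + d)] visits [u + a d + [d = 1 mod n] c a (a - 1)] for [a] in [R], so every
   face is a Hamiltonian [N]-cycle and the map is polytopal of type [{N, 2 m}].
   sigma1 and sigma2 commute with the rotation and [G] is transitive on darts, so [G]
   acts rotarily by map automorphisms.  Conversely, after composing with an element
   of [G], a map automorphism stabilises the base face [0, -1, -2, ...] and so acts
   on labels as [x |-> b + x] or [x |-> b - x].  Translations are powers of sigma1,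
   whereas a reflection sends the two edges of a face at [0] to [{b - 1, b}] and
   [{b, b + 1 - n}], which are not consecutive in the rotation at [b] and so lie on
   no common face. *)

Section ZpReduction.
Variables p d : nat.
Hypotheses (d_gt1 : (1 < d)%N) (d_dvd_p : (d %| p)%N) (p_gt0 : (0 < p)%N).

Let p_gt1 : (1 < p)%N. Proof. exact: leq_trans d_gt1 (dvdn_leq p_gt0 d_dvd_p). Qed.

Definition Zp_red (x : 'Z_p) : 'Z_d := (nat_of_ord x)%:R.

Lemma Zp_red_nat k : Zp_red k%:R = k%:R.
Proof.
by rewrite /Zp_red val_Zp_nat // -(Zp_nat_mod d_gt1) modn_dvdm // Zp_nat_mod.
Qed.

Fact Zp_red_is_nmod_morphism : nmod_morphism Zp_red.
Proof.
split=> [|x y]; first by [].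
by rewrite -[x]natr_Zp -[y]natr_Zp -natrD !Zp_red_nat natrD.
Qed.

Fact Zp_red_is_monoid_morphism : monoid_morphism Zp_red.
Proof.
split=> [|x y]; first exact: (Zp_red_nat 1).
by rewrite -[x]natr_Zp -[y]natr_Zp -natrM !Zp_red_nat natrM.
Qed.

Lemma Zp_red_eq0 x : Zp_red x = 0 -> exists t, x = d%:R * t.
Proof.
move=> /(congr1 val); rewrite /= val_Zp_nat // => /eqP x_mod.
exists (nat_of_ord x %/ d)%:R; rewrite -natrM mulnC -[LHS]natr_Zp.
by rewrite {1}(divn_eq (nat_of_ord x) d) (eqP x_mod) addn0.
Qed.

End ZpReduction.

Lemma adj_sym n m (v w : vtx n m) : adj v w = adj w v.
Proof.
by rewrite /adj orbC; congr orb; apply/eqP/eqP => ->; rewrite ?addrK ?subrK.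
Qed.

Lemma eq_set2 (T : finType) (a b c d : T) :
  [set a; b] = [set c; d] -> a != b -> (a = c /\ b = d) \/ (a = d /\ b = c).
Proof.
move=> eq_ab_cd a_neq_b.
have : a \in [set c; d] by rewrite -eq_ab_cd set21.
have : b \in [set c; d] by rewrite -eq_ab_cd set22.
move: a_neq_b => /[swap] /set2P[]-> /[swap] /set2P[]->; rewrite ?eqxx //.
- by right.
- by left.
Qed.

Lemma eq_subr_eq0 (T : zmodType) (x y z : T) : x = y -> x - y = z -> z = 0.
Proof. by move=> -> <-; rewrite subrr. Qed.

Lemma Zp_cycle_dihedral p (f : 'Z_p -> 'Z_p) : (2 < p)%N -> injective f ->
  (forall x, f (x + 1) - f x = 1 \/ f (x + 1) - f x = -1) ->
  exists b, (forall x, f x = b + x) \/ (forall x, f x = b - x).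
Proof.
move=> p_gt2 f_inj f_step.
have two_neq0 : (1 + 1 : 'Z_p) != 0.
  have val2 : nat_of_ord (1 + 1 : 'Z_p) = 2%N.
    by rewrite -[1 + 1]/(2%:R) (val_Zp_nat (ltnW p_gt2)) modn_small.
  by apply/eqP => eq20; move: val2; rewrite eq20.
have step_const x : f (x + 1 + 1) - f (x + 1) = f (x + 1) - f x.
  have f2_neq : f (x + 1 + 1) != f x.
    by rewrite (inj_eq f_inj) -subr_eq0 addrAC [x + 1]addrC addrK two_neq0.
  have sum : f (x + 1 + 1) - f x = (f (x + 1 + 1) - f (x + 1)) + (f (x + 1) - f x).
    by rewrite addrA subrK.
  have [e1|e1] := f_step x; have [e2|e2] := f_step (x + 1); rewrite e1 e2 //;
    by move: f2_neq; rewrite -subr_eq0 sum e1 e2 ?addrN ?addNr eqxx.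
have f_diff k : f (k%:R + 1) - f k%:R = f 1 - f 0.
  by elim: k => [|k IH]; rewrite ?add0r // -natr1 step_const.
have f_nat k : f k%:R = f 0 + k%:R * (f 1 - f 0).
  elim: k => [|k IH]; first by rewrite mul0r addr0.
  by rewrite -natr1 -[f (_ + 1)](subrK (f k%:R)) f_diff IH; ring.
exists (f 0); have [e|e] := f_step 0; rewrite add0r in e; [left | right] => x;
  by rewrite -[x]natr_Zp f_nat e; ring.
Qed.

Section RotationSystems.
Variables n m : nat.
Local Notation V := (vtx n m).
Variable rot : V -> V -> V.
Hypotheses (adj_rot : forall v w, adj v w -> adj v (rot v w))
           (rot_inj : forall v, injective (rot v)).
Implicit Types (v w : V) (d e : V * V) (a : {perm V}).

Local Notation step := (face_step rot).

Lemma dart_face_step d : dart d -> dart (step d).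
Proof. by case: d => u v; rewrite /dart /= adj_sym => /adj_rot. Qed.

Lemma dart_iter_face_step d k : dart d -> dart (iter k step d).
Proof. by move=> dd; elim: k => //= k; apply: dart_face_step. Qed.

Lemma face_step_inj : injective step.
Proof. by case=> u v [u' v'] [<-] /rot_inj ->. Qed.

Lemma in_faceP d e : in_face rot d e -> exists k, e = iter k step d.
Proof. by move=> de; exists (findex step d e); rewrite iter_findex. Qed.

Lemma in_face_iter d k : in_face rot d (iter k step d).
Proof. exact: fconnect_iter. Qed.

Lemma in_face_eq d e : in_face rot d e -> in_face rot e =1 in_face rot d.
Proof.
move=> de x; apply/idP/idP; first exact: connect_trans.
by apply: connect_trans; rewrite /in_face fconnect_sym //; apply: face_step_inj.
Qed.

Lemma face_edges_eq d e : in_face rot d e -> face_edges rot e = face_edges rot d.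
Proof.
move=> /in_face_eq de; apply/setP => E.
by apply/imsetP/imsetP => -[x dx ->]; exists x; rewrite // !inE ?de in dx *.
Qed.

Definition dmap a d := (a d.1, a d.2).

Definition rot_aut a :=
  (forall v w, adj (a v) (a w) = adj v w) /\
  (forall v w, adj v w -> a (rot v w) = rot (a v) (a w)).

Lemma rot_aut1 : rot_aut 1%g.
Proof. by split=> *; rewrite !perm1. Qed.

Lemma rot_autM a b : rot_aut a -> rot_aut b -> rot_aut (a * b)%g.
Proof.
move=> [a_adj a_rot] [b_adj b_rot]; split=> v w; rewrite !permM ?b_adj ?a_adj //.
by move=> vw; rewrite a_rot // b_rot // a_adj.
Qed.

Lemma rot_aut_face_step a d : rot_aut a -> dart d -> dmap a (step d) = step (dmap a d).
Proof. by case=> _ a_rot; case: d => u v dd; rewrite /dmap /= a_rot // adj_sym. Qed.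

Lemma rot_aut_iter a d k : rot_aut a -> dart d ->
  dmap a (iter k step d) = iter k step (dmap a d).
Proof.
move=> ra dd; elim: k => //= k IH.
by rewrite rot_aut_face_step ?IH //; apply: dart_iter_face_step.
Qed.

Lemma face_edges_rot_aut a d : rot_aut a -> dart d ->
  [set a @: (E : {set V}) | E in face_edges rot d] = face_edges rot (dmap a d).
Proof.
move=> ra dd; rewrite /face_edges -imset_comp; apply/setP => E.
apply/imsetP/imsetP => -[e /in_faceP[k ->] ->].
  exists (dmap a (iter k step d)); first by rewrite inE rot_aut_iter ?in_face_iter.
  by rewrite /= imsetU1 imset_set1.
exists (iter k step d); first exact: in_face_iter.
by rewrite -rot_aut_iter //= imsetU1 imset_set1.
Qed.

Lemma rot_aut_map_aut a : rot_aut a -> map_aut rot a.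
Proof.
move=> ra; split; first by case: ra.
move=> d dd; exists (dmap a d); last exact: face_edges_rot_aut.
by case: ra => a_adj _; rewrite /dart a_adj.
Qed.

Lemma rot_aut_face_rotation a d : rot_aut a -> dart d -> dmap a d = step d ->
  face_stab rot d a /\ (forall u w, u \in face_verts rot d -> w \in face_verts rot d ->
    exists k, (a ^+ k)%g u = w).
Proof.
move=> ra dd ad.
have a_step e : in_face rot d e -> dmap a e = step e.
  by case/in_faceP=> k ->; rewrite rot_aut_iter // ad -iterSr iterS.
have aX k e : in_face rot d e -> dmap (a ^+ k)%g e = iter k step e.
  elim: k e => [|k IH] e de; first by rewrite expg0 /dmap !perm1; case: e {de}.
  rewrite expgSr [LHS]/dmap !permM -[(_, _)]/(dmap a (dmap _ e)) IH // a_step //.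
  by apply: connect_trans de (in_face_iter _ _).
split; first by rewrite /face_stab face_edges_rot_aut // ad; apply/face_edges_eq/fconnect1.
move=> _ _ /imsetP[e de ->] /imsetP[e' de' ->].
have /in_faceP[k ->] : in_face rot e e' by rewrite (in_face_eq de).
by exists k; rewrite -[LHS]/(dmap _ e).1 aX.
Qed.
End RotationSystems.

Section ChiralMap.
Variables m s : nat.
Hypotheses (m_odd : odd m) (m_ge3 : (3 <= m)%N) (s_gt0 : (0 < s)%N).
Local Notation n := (s * m)%N.
Local Notation N := (m * (s * m))%N.
Local Notation R := 'Z_N.
Local Notation V := (vtx n m).

Let m_gt1 : (1 < m)%N. Proof. exact: leq_trans m_ge3. Qed.
Let n_ge3 : (3 <= n)%N. Proof. by rewrite -[3%N]mul1n leq_mul. Qed.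
Let n_gt1 : (1 < n)%N. Proof. exact: leq_trans n_ge3. Qed.
Let n3_le_N : (3 * n <= N)%N. Proof. by rewrite leq_mul2r m_ge3 orbT. Qed.
Let N_gt2 : (2 < N)%N. Proof. lia. Qed.
Let N_gt1 : (1 < N)%N. Proof. exact: ltnW. Qed.

Lemma natZN_eq0 k : (N %| k)%N -> (k%:R : R) = 0.
Proof. by move=> /eqP Nk; rewrite -(Zp_nat_mod N_gt1) Nk. Qed.

Lemma natZN_inj a b : (a < N)%N -> (b < N)%N -> (a%:R : R) = b%:R -> a = b.
Proof.
by move=> aN bN /(congr1 val); rewrite /= !val_Zp_nat // !modn_small.
Qed.

Lemma natZN_neq a b : (a < N)%N -> (b < N)%N -> a != b -> (a%:R : R) != b%:R.
Proof. by move=> aN bN; apply: contra => /eqP /(natZN_inj aN bN) ->. Qed.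

Definition nR : R := locked n%:R.
Definition cR : R := locked (n * m.+1./2)%:R.

Lemma nR_sqr : nR * nR = 0.
Proof. by rewrite /nR -lock -natrM natZN_eq0 //; apply/dvdnP; exists s; lia. Qed.

Lemma nR_m : nR * m%:R = 0.
Proof. by rewrite /nR -lock -natrM natZN_eq0 // mulnC. Qed.

Lemma cR_nR : cR * nR = 0.
Proof.
by rewrite /cR /nR -!lock -natrM natZN_eq0 //; apply/dvdnP; exists (s * m.+1./2)%N; lia.
Qed.

Lemma cR_sqr : cR * cR = 0.
Proof.
rewrite /cR -lock -natrM natZN_eq0 //.
by apply/dvdnP; exists (s * m.+1./2 * m.+1./2)%N; lia.
Qed.

Lemma nR_twice_cR : nR = cR + cR.
Proof.
have half_m1 : (m.+1./2).*2 = m.+1 by rewrite -[RHS]odd_double_half /= m_odd.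
rewrite /cR /nR -!lock -natrD -mulnDr addnn half_m1 mulnS natrD.
by rewrite [X in _ + X]natZN_eq0 ?addr0 // mulnC.
Qed.

Lemma nR_neq0 : nR != 0.
Proof. by rewrite /nR -lock; apply: (@natZN_neq n 0); lia. Qed.

Lemma nR_neq1 : nR != 1.
Proof. by rewrite /nR -lock; apply: (@natZN_neq n 1); lia. Qed.

Lemma nR_neq2 : nR != 1 + 1.
Proof. by rewrite /nR -lock; apply: (@natZN_neq n 2); lia. Qed.

Lemma nR_double_neq0 : nR + nR != 0.
Proof. by rewrite /nR -lock -natrD; apply: (@natZN_neq (n + n) 0); lia. Qed.

Local Ltac ring_nc := ring: nR_sqr cR_nR nR_twice_cR cR_sqr.

Local Notation red := (@Zp_red N n).

Let n_dvd_N : (n %| N)%N. Proof. exact: dvdn_mull. Qed.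
Let N_gt0 : (0 < N)%N. Proof. exact: ltnW. Qed.

HB.instance Definition _ := GRing.isNmodMorphism.Build _ _ red
  (Zp_red_is_nmod_morphism n_gt1 n_dvd_N N_gt0).
HB.instance Definition _ := GRing.isMonoidMorphism.Build _ _ red
  (Zp_red_is_monoid_morphism n_gt1 n_dvd_N N_gt0).

Lemma red_nat k : red k%:R = k%:R.
Proof. exact: Zp_red_nat. Qed.

Lemma red_nR : red nR = 0.
Proof. by rewrite /nR -lock red_nat -(Zp_nat_mod n_gt1) modnn. Qed.

Lemma red_cR : red cR = 0.
Proof. by rewrite /cR -lock natrM rmorphM /= red_nat -(Zp_nat_mod n_gt1) modnn mul0r. Qed.

Lemma red_nRM t : red (nR * t) = 0.
Proof. by rewrite rmorphM /= red_nR mul0r. Qed.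

Lemma red_cRM t : red (cR * t) = 0.
Proof. by rewrite rmorphM /= red_cR mul0r. Qed.

Lemma red_1nRM t x : red ((1 + nR * t) * x) = red x.
Proof. by rewrite rmorphM rmorphD /= red_nRM rmorph1 addr0 mul1r. Qed.

Lemma red_1nR t : red (1 + nR * t) = 1.
Proof. by rewrite -[_ + _]mulr1 red_1nRM rmorph1. Qed.

Lemma red_N1nR t : red (-1 + nR * t) = -1.
Proof. by rewrite rmorphD rmorphN /= red_nRM rmorph1 addr0. Qed.

Lemma red_eq0 x : red x = 0 -> exists t, x = nR * t.
Proof. by move/Zp_red_eq0; rewrite /nR -lock; apply. Qed.

Lemma Zn_nat_eq0 k : ((k%:R : 'Z_n) == 0) = (n %| k)%N.
Proof.
apply/eqP/idP => [/(congr1 val)|nk]; first by rewrite /= val_Zp_nat // => /eqP.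
by rewrite -(Zp_nat_mod n_gt1) (eqP nk).
Qed.

Lemma Zn_oneN1 : (1 : 'Z_n) != -1.
Proof.
apply/eqP => one_N1; have : (2%:R : 'Z_n) == 0 by rewrite mulr2n {1}one_N1 addNr.
by rewrite Zn_nat_eq0 gtnNdvd.
Qed.

Lemma Zn_N1one : (-1 : 'Z_n) != 1.
Proof. by rewrite eq_sym Zn_oneN1. Qed.

Lemma Zn_val_gt0 (i : 'Z_n) : i != 0 -> (0 < nat_of_ord i)%N.
Proof. by rewrite lt0n; apply: contra => /eqP i0; apply/eqP/val_inj. Qed.

Lemma Zn_val_lt (i : 'Z_n) : (nat_of_ord i < n)%N.
Proof. by case: i => k /=; rewrite Zp_cast. Qed.

Definition lift_row (i : 'Z_n) : R := (nat_of_ord i)%:R.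

Lemma lift_row0 : lift_row 0 = 0. Proof. by []. Qed.

Lemma lift_row_add1 i : lift_row (i + 1) = lift_row i + 1 - nR * (i + 1 == 0)%:R.
Proof.
rewrite /lift_row -[i in i + 1]natr_Zp !natr1 val_Zp_nat // Zn_nat_eq0 /nR -lock.
have := Zn_val_lt i; rewrite leq_eqVlt => /orP[/eqP i_last | i_lt].
  by rewrite i_last modnn dvdnn mulr1 subrr.
by rewrite modn_small // gtnNdvd // mulr0 subr0.
Qed.

Lemma lift_row_opp i : lift_row (- i) = nR * (i != 0)%:R - lift_row i.
Proof.
have [->|i_nz] := eqVneq i 0; first by rewrite oppr0 lift_row0 mulr0 subr0.
rewrite /lift_row /nR -lock mulr1; have i_gt0 := Zn_val_gt0 i_nz.
have i_le : (nat_of_ord i <= n)%N by apply: ltnW; apply: Zn_val_lt.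
have -> : - i = (n - nat_of_ord i)%:R.
  by apply/eqP; rewrite eq_sym -subr_eq0 opprK -[i in _ + i]natr_Zp -natrD subnK // Zn_nat_eq0.
by rewrite val_Zp_nat // modn_small ?natrB // ltn_subrL i_gt0 ltnW.
Qed.

Definition ncol (j : 'Z_m) : R := nR * (nat_of_ord j)%:R.

Lemma ncol_nat k : ncol k%:R = nR * k%:R.
Proof.
rewrite /ncol val_Zp_nat // {2}(divn_eq k m) natrD natrM.
by rewrite mulrDr mulrCA nR_m mulr0 add0r.
Qed.

Fact ncol_is_nmod_morphism : nmod_morphism ncol.
Proof.
split=> [|i j]; first by rewrite /ncol mulr0.
by rewrite -[i]natr_Zp -[j]natr_Zp -natrD !ncol_nat natrD mulrDr.
Qed.

HB.instance Definition _ := GRing.isNmodMorphism.Build _ _ ncol ncol_is_nmod_morphism.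

Definition label (v : V) : R := lift_row v.1 + ncol v.2 - nR * (v.1 != 0)%:R.

Definition vertex (x : R) : V :=
  (red x, (nat_of_ord x %/ n + (nat_of_ord x %% n != 0))%N%:R).

Lemma vertexK : cancel vertex label.
Proof.
move=> x; rewrite /label /vertex /= /lift_row /Zp_red val_Zp_nat // Zn_nat_eq0 ncol_nat.
rewrite natrD mulrDr addrA addrK /nR -lock -natrM -natrD.
by rewrite addnC [(n * _)%N]mulnC -divn_eq natr_Zp.
Qed.

Lemma vertex_inj : injective vertex. Proof. exact: can_inj vertexK. Qed.

Lemma labelK : cancel label vertex.
Proof.
have [|label' vertexK' labelK'] := inj_card_bij vertex_inj.
  by rewrite card_prod !card_ord !Zp_cast // mulnC.
by move=> v; rewrite -[v]labelK' vertexK.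
Qed.

Lemma vertex_surj v : exists x, v = vertex x.
Proof. by exists (label v); rewrite labelK. Qed.

Lemma label_sigma1 v : label (sigma1 n m v) = label v + 1.
Proof.
case: v => i j; rewrite /sigma1 permE /sigma1_fun /label /= lift_row_add1 raddfD /=.
by rewrite ncol_nat; case: (i + 1 == 0); case: (i == 0) => /=; ring.
Qed.

(* The triangular numbers in [ell] come from [c r (r - 1) = n (r (r - 1) / 2)] in [R]. *)
Lemma ncol_ell i :
  ncol (ell m i) = nR * (i != 0)%:R + cR * lift_row i * (lift_row i - 1).
Proof.
have [->|i_nz] := eqVneq i 0; first by rewrite /ell eqxx raddf0 lift_row0 /=; ring.
rewrite /ell (negbTE i_nz) ncol_nat /lift_row mulr1 -[val i]/(nat_of_ord i).
have := Zn_val_gt0 i_nz; case: (nat_of_ord i) => // r _ /=.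
set T := (r * r.+1 %/ 2)%N.
have T2 : (r * r.+1 = T.*2)%N.
  by rewrite /T divn2 -[LHS]odd_double_half oddM /= andbN add0n.
have h2 : (m.+1./2).*2 = m.+1 by rewrite -[RHS]odd_double_half /= m_odd.
have cT : cR * r.+1%:R * r%:R = nR * T%:R.
  rewrite /cR /nR -!lock -!natrM.
  have -> : (n * m.+1./2 * r.+1 * r = n * T + N * T)%N by nia.
  by rewrite natrD [X in _ + X]natZN_eq0 ?addr0 // dvdn_mulr.
have r1 : r.+1%:R - 1 = r%:R :> R by rewrite -natr1 addrK.
by rewrite r1 natrD mulrDr mulr1 -cT.
Qed.

Lemma label_sigma2 v : label (sigma2 n m v) = - label v + cR * label v * (label v - 1).
Proof.
case: v => i j; rewrite /sigma2 permE /sigma2_fun /label /=.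
rewrite lift_row_opp raddfD raddfN /= ncol_ell oppr_eq0 /ncol.
by case: (i == 0) => /=; ring_nc.
Qed.

Lemma sigma1_vertex x : sigma1 n m (vertex x) = vertex (x + 1).
Proof. by rewrite -[LHS]labelK label_sigma1 vertexK. Qed.

Lemma sigma2_vertex x : sigma2 n m (vertex x) = vertex (- x + cR * x * (x - 1)).
Proof. by rewrite -[LHS]labelK label_sigma2 vertexK. Qed.

Definition is_step (d : R) := (red d == 1) || (red d == -1).

Lemma adj_vertex x y : adj (vertex x) (vertex y) = is_step (y - x).
Proof. by rewrite /adj /is_step /= rmorphB /= !subr_eq [1 + _]addrC [-1 + _]addrC. Qed.

Lemma is_step_cases d : is_step d ->
  (exists2 t, d = 1 + nR * t & red d = 1) \/ (exists2 t, d = -1 + nR * t & red d = -1).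
Proof.
case/orP=> /eqP red_d; [left | right].
  have [|t dt] := @red_eq0 (d - 1); first by rewrite rmorphB /= red_d rmorph1 subrr.
  by exists t; rewrite // -dt addrC subrK.
have [|t dt] := @red_eq0 (d + 1); first by rewrite rmorphD /= red_d rmorph1 addNr.
by exists t; rewrite // -dt addrC addrK.
Qed.

Lemma is_step_red_opp d d' : red d' = - red d -> is_step d' = is_step d.
Proof. by move=> dd'; rewrite /is_step dd' !eqr_oppLR opprK orbC. Qed.

Lemma is_step_1 : is_step 1. Proof. by rewrite /is_step rmorph1 eqxx. Qed.
Lemma is_step_N1 : is_step (-1). Proof. by rewrite /is_step rmorphN rmorph1 eqxx orbT. Qed.

Definition turn (d : R) : R := - d + (if red d == 1 then 0 else nR).

Lemma turn_1 d : red d = 1 -> turn d = - d.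
Proof. by rewrite /turn => ->; rewrite eqxx addr0. Qed.

Lemma turn_N1 d : red d = -1 -> turn d = - d + nR.
Proof. by rewrite /turn => ->; rewrite (negbTE Zn_N1one). Qed.

Lemma red_turn d : red (turn d) = - red d.
Proof. by rewrite /turn rmorphD rmorphN /=; case: ifP; rewrite ?rmorph0 ?red_nR addr0. Qed.

Lemma is_step_turn d : is_step (turn d) = is_step d.
Proof. exact/is_step_red_opp/red_turn. Qed.

Lemma turn_inj : injective turn.
Proof.
move=> d d' /[dup] /(congr1 red); rewrite !red_turn => /oppr_inj red_dd'.
by rewrite /turn red_dd' => /addIr /oppr_inj.
Qed.

Lemma turnK d : is_step d -> turn (turn d) = (1 + nR) * d.
Proof.
case/is_step_cases=> -[t -> red_d].
  by rewrite (turn_1 red_d) turn_N1; [ring_nc | rewrite rmorphN /= red_d].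
rewrite (turn_N1 red_d) turn_1; first ring_nc.
by rewrite rmorphD rmorphN /= red_d red_nR opprK addr0.
Qed.

Lemma iter_turn_double d k : is_step d -> iter k.*2 turn d = (1 + nR * k%:R) * d.
Proof.
move=> is_d; elim: k => [|k IH]; first by rewrite mulr0 addr0 mul1r.
rewrite doubleS /= IH turnK; last by rewrite /is_step red_1nRM.
by rewrite -natr1; ring_nc.
Qed.

Lemma turn_transitive_red d d' : is_step d -> red d' = red d ->
  exists k, iter k turn d = d'.
Proof.
move=> is_d red_dd'.
have [|t dt] := @red_eq0 (d' - d); first by rewrite rmorphB /= red_dd' subrr.
exists (nat_of_ord (t * d)).*2; rewrite iter_turn_double // natr_Zp -[d'](subrK d) dt.
by case/is_step_cases: is_d => -[t0 -> _]; ring_nc.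
Qed.

Lemma turn_transitive d d' : is_step d -> is_step d' -> exists k, iter k turn d = d'.
Proof.
move=> is_d is_d'; have [red_dd'|neq_dd'] := eqVneq (red d') (red d).
  exact: turn_transitive_red.
have [k turn_k] : exists k, iter k turn (turn d) = d'.
  apply: turn_transitive_red; first by rewrite is_step_turn.
  rewrite red_turn; move: neq_dd'.
  by case/orP: is_d => /eqP->; case/orP: is_d' => /eqP->; rewrite ?eqxx ?opprK.
by exists k.+1; rewrite iterSr.
Qed.

Definition rot (v w : V) : V := vertex (label v + turn (label w - label v)).

Lemma rot_vertex x y : rot (vertex x) (vertex y) = vertex (x + turn (y - x)).
Proof. by rewrite /rot !vertexK. Qed.

Lemma adj_rot v w : adj v w -> adj v (rot v w).
Proof.
have [x ->] := vertex_surj v; have [y ->] := vertex_surj w.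
by rewrite rot_vertex !adj_vertex addrAC subrr add0r is_step_turn.
Qed.

Lemma rot_inj v : injective (rot v).
Proof.
move=> w w'; rewrite /rot => /vertex_inj /addrI /turn_inj /addIr.
exact: can_inj labelK _ _.
Qed.

Lemma iter_rot x d k : iter k (rot (vertex x)) (vertex (x + d)) = vertex (x + iter k turn d).
Proof. by elim: k => //= k ->; rewrite rot_vertex addrAC subrr add0r. Qed.

Lemma is_rotation_rot : is_rotation rot.
Proof.
split; first exact: adj_rot.
move=> v w w'; have [x ->] := vertex_surj v.
have [y ->] := vertex_surj w; have [z ->] := vertex_surj w'.
rewrite !adj_vertex => is_yx is_zx; have [k turn_k] := turn_transitive is_yx is_zx.
by exists k; rewrite -[y](addrNK x) addrC iter_rot turn_k addrC subrK.
Qed.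

Local Notation step := (face_step rot).

Lemma face_step_vertex x y : step (vertex x, vertex y) = (vertex y, vertex (y + turn (x - y))).
Proof. by rewrite /face_step rot_vertex. Qed.

(* The [a]-th vertex on the face through the dart [(u, u + d)]. *)
Definition face_pt (u d a : R) : R :=
  u + a * d + (if red d == 1 then cR * a * (a - 1) else 0).

Lemma face_pt0 u d : face_pt u d 0 = u.
Proof. by rewrite /face_pt; case: ifP => _; ring. Qed.

Lemma face_pt1 u d : face_pt u d 1 = u + d.
Proof. by rewrite /face_pt; case: ifP => _; ring. Qed.

Lemma face_ptS (u d a : R) : is_step d ->
  face_pt u d (a + 1) + turn (face_pt u d a - face_pt u d (a + 1)) = face_pt u d (a + 1 + 1).
Proof.
case/is_step_cases=> -[t -> red_d]; rewrite /face_pt red_d ?eqxx ?(negbTE Zn_N1one).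
  have -> : u + a * (1 + nR * t) + cR * a * (a - 1) -
      (u + (a + 1) * (1 + nR * t) + cR * (a + 1) * (a + 1 - 1)) =
      - (1 + nR * t + nR * a) by ring_nc.
  rewrite turn_N1; first ring_nc.
  by rewrite rmorphN rmorphD /= red_d red_nRM addr0.
have -> : u + a * (-1 + nR * t) + 0 - (u + (a + 1) * (-1 + nR * t) + 0) = - (-1 + nR * t).
  by ring.
by rewrite turn_1 ?rmorphN /= ?red_d ?opprK //; ring.
Qed.

Lemma iter_face_step u d k : is_step d ->
  iter k step (vertex u, vertex (u + d)) =
  (vertex (face_pt u d k%:R), vertex (face_pt u d (k%:R + 1))).
Proof.
move=> is_d; elim: k => [|k IH]; first by rewrite /= add0r face_pt0 face_pt1.
by rewrite iterS IH face_step_vertex face_ptS // -natr1.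
Qed.

Lemma red_face_pt u d a : red (face_pt u d a) = red u + red a * red d.
Proof.
rewrite /face_pt !rmorphD rmorphM /=; case: ifP => _; last by rewrite rmorph0 addr0.
by rewrite -!mulrA red_cRM addr0.
Qed.

Lemma face_pt_inj u d : is_step d -> injective (face_pt u d).
Proof.
move=> is_d a b eq_ab; have red_d2 : red d * red d = 1.
  by case/orP: is_d => /eqP->; rewrite ?mulrNN mulr1.
have [|t ab] := @red_eq0 (a - b).
  have := congr1 red eq_ab; rewrite !red_face_pt => /addrI red_ab.
  by rewrite rmorphB /= -[red a]mulr1 -[red b]mulr1 -red_d2 !mulrA red_ab subrr.
have a_eq : a = b + nR * t by rewrite -ab addrC subrK.
have shift : face_pt u d a = face_pt u d b + nR * t * d.
  by rewrite a_eq /face_pt; case: ifP => _; ring_nc.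
move: eq_ab; rewrite shift => /(congr1 (fun z => z - face_pt u d b)).
rewrite addrC addKr subrr => ntd0.
have ntdd : nR * t * d * d = nR * t.
  by case/is_step_cases: is_d => -[t0 -> _]; ring_nc.
by rewrite a_eq -ntdd ntd0 mul0r addr0.
Qed.

Lemma dart_vertex (d : V * V) : dart d ->
  exists u e, is_step e /\ d = (vertex u, vertex (u + e)).
Proof.
case: d => v w; have [x ->] := vertex_surj v; have [y ->] := vertex_surj w.
by rewrite /dart /= adj_vertex => is_yx; exists x, (y - x); rewrite [x + _]addrC subrK.
Qed.

Lemma face_order d : dart d -> fingraph.order step d = N.
Proof.
case/dart_vertex=> u [e [is_e ->]]; set d0 := (_, _).
pose walk (k : 'I_N) := iter k step d0.
have walk_inj : injective walk.
  move=> i j; rewrite /walk !iter_face_step // => /(congr1 fst) /vertex_inj.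
  by move/(face_pt_inj is_e)/(natZN_inj (ltn_ord i) (ltn_ord j))/val_inj.
rewrite /fingraph.order -[RHS](card_ord N) -(card_codom walk_inj).
apply: eq_card => y; apply/idP/codomP => [|[i ->]]; last exact: fconnect_iter.
move=> /iter_findex <-; exists (Ordinal (ltn_pmod (findex step d0 y) N_gt0)).
by rewrite /walk !iter_face_step //= Zp_nat_mod.
Qed.

Definition row_step (e : V * V) : 'Z_n := e.2.1 - e.1.1.

Lemma row_step_face_step e : row_step (step e) = row_step e.
Proof.
case: e => v w; have [x ->] := vertex_surj v; have [y ->] := vertex_surj w.
by rewrite /row_step face_step_vertex /= rmorphD /= red_turn rmorphB /=; ring.
Qed.

Lemma row_step_in_face d e : in_face rot d e -> row_step e = row_step d.
Proof. by case/in_faceP=> k ->; elim: k => //= k <-; apply: row_step_face_step. Qed.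

Lemma polytopal_rot : polytopal rot.
Proof.
split=> d dd; last first.
  apply/negP => /row_step_in_face; case/dart_vertex: dd => u [e [is_e ->]].
  rewrite /row_step /= -opprB.
  have -> : red (u + e) - red u = red e by rewrite rmorphD /= addrAC subrr add0r.
  move=> /eqP.
  by case/orP: is_e => /eqP->; rewrite ?opprK ?(negbTE Zn_N1one) ?(negbTE Zn_oneN1).
split; last by rewrite face_order //; lia.
case/dart_vertex: dd => u [e [is_e ->]] k.
rewrite iter_face_step //= -{2}(face_pt0 u e) => /vertex_inj /(face_pt_inj is_e) ->.
by rewrite add0r face_pt0 face_pt1.
Qed.

Lemma map_type_rot : map_type rot N (2 * m).
Proof.
split; first exact: face_order.
move=> v; have -> : [set w | adj v w] = setX [set v.1 + 1; v.1 - 1] [set: 'Z_m].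
  by apply/setP => -[i j]; rewrite !inE /adj /= andbT.
have card_Zm : #|'Z_m| = m by rewrite card_ord Zp_cast.
by rewrite cardsX cards2 cardsT card_Zm (inj_eq (addrI _)) Zn_oneN1.
Qed.

Local Notation G := <<[set sigma1 n m; sigma2 n m]>>%g.

Lemma sigma1_in_G : sigma1 n m \in G.
Proof. by rewrite mem_gen // !inE eqxx. Qed.

Lemma sigma2_in_G : sigma2 n m \in G.
Proof. by rewrite mem_gen // !inE eqxx orbT. Qed.

Lemma rot_aut_sigma1 : rot_aut rot (sigma1 n m).
Proof.
split=> v w; have [x ->] := vertex_surj v; have [y ->] := vertex_surj w.
  by rewrite !sigma1_vertex !adj_vertex; congr is_step; ring.
move=> _; rewrite rot_vertex !sigma1_vertex rot_vertex.
have -> : y + 1 - (x + 1) = y - x by ring.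
by rewrite addrAC.
Qed.

Lemma rot_aut_sigma2 : rot_aut rot (sigma2 n m).
Proof.
split=> v w; have [x ->] := vertex_surj v; have [y ->] := vertex_surj w.
  rewrite !sigma2_vertex !adj_vertex; apply: is_step_red_opp.
  by rewrite -!mulrA !rmorphB !rmorphD !rmorphN /= !red_cRM !addr0; ring.
have [e ->] : exists e, y = x + e by exists (y - x); rewrite addrC subrK.
rewrite adj_vertex rot_vertex !sigma2_vertex rot_vertex addrAC subrr add0r.
case/is_step_cases=> -[t -> red_e]; congr vertex.
  have -> : - (x + (1 + nR * t)) + cR * (x + (1 + nR * t)) * (x + (1 + nR * t) - 1) -
      (- x + cR * x * (x - 1)) = -1 + nR * (x - t) by ring_nc.
  by rewrite (turn_1 red_e) (turn_N1 (red_N1nR _)); ring_nc.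
have -> : - (x + (-1 + nR * t)) + cR * (x + (-1 + nR * t)) * (x + (-1 + nR * t) - 1) -
    (- x + cR * x * (x - 1)) = 1 + nR * (1 - x - t) by ring_nc.
by rewrite (turn_N1 red_e) (turn_1 (red_1nR _)); ring_nc.
Qed.

Lemma rot_aut_G a : a \in G -> rot_aut rot a.
Proof.
case/gen_prodgP=> k [g g_gen ->]; apply: (big_ind (rot_aut rot)) => //.
- exact: rot_aut1.
- exact: rot_autM.
by move=> i _; move: (g_gen i); rewrite !inE => /orP[]/eqP->;
  [apply: rot_aut_sigma1 | apply: rot_aut_sigma2].
Qed.

Lemma map_aut_G a : a \in G -> map_aut rot a.
Proof. by move=> aG; apply: rot_aut_map_aut (rot_aut_G aG); apply: adj_rot. Qed.

Definition shift (b : R) : {perm V} := (sigma1 n m ^+ nat_of_ord b)%g.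

Lemma shift_vertex b x : shift b (vertex x) = vertex (x + b).
Proof.
rewrite /shift permX -[in RHS](natr_Zp b); elim: (nat_of_ord b) => [|k IH] /=.
  by rewrite addr0.
by rewrite IH sigma1_vertex -natr1 addrA.
Qed.

Lemma shift_in_G b : shift b \in G.
Proof. exact/groupX/sigma1_in_G. Qed.

Lemma sigma2_sqr_vertex x : (sigma2 n m ^+ 2)%g (vertex x) = vertex ((1 + nR) * x).
Proof. by rewrite permX /= !sigma2_vertex; congr vertex; ring_nc. Qed.

Definition dilate (k : R) : {perm V} := ((sigma2 n m ^+ 2) ^+ nat_of_ord k)%g.

Lemma dilate_vertex k x : dilate k (vertex x) = vertex ((1 + nR * k) * x).
Proof.
rewrite /dilate permX -[in RHS](natr_Zp k); elim: (nat_of_ord k) => [|i IH] /=.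
  by rewrite mulr0 addr0 mul1r.
by rewrite IH sigma2_sqr_vertex -natr1; congr vertex; ring_nc.
Qed.

Lemma dilate_in_G k : dilate k \in G.
Proof. exact/groupX/groupX/sigma2_in_G. Qed.

Lemma sigma2_vertex0 : sigma2 n m (vertex 0) = vertex 0.
Proof. by rewrite sigma2_vertex; congr vertex; ring. Qed.

Lemma sigma2_vertex_step d : is_step d -> sigma2 n m (vertex d) = vertex (turn d).
Proof.
rewrite sigma2_vertex; case/is_step_cases=> -[t -> red_d]; congr vertex.
  by rewrite turn_1 //; ring_nc.
by rewrite turn_N1 //; ring_nc.
Qed.

Definition base_dart : V * V := (vertex 0, vertex (-1)).

Lemma dart_base : dart base_dart.
Proof. by rewrite /dart adj_vertex subr0 is_step_N1. Qed.

Lemma dart_orbit_base d : dart d -> exists2 g, g \in G & dmap g base_dart = d.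
Proof.
case/dart_vertex=> u [e [is_e ->]].
case/is_step_cases: is_e => -[t -> red_e].
  exists (sigma2 n m * dilate (t - 1) * shift u)%g.
    by rewrite !groupM ?sigma2_in_G ?dilate_in_G ?shift_in_G.
  rewrite /dmap /base_dart /= !permM sigma2_vertex0 sigma2_vertex !dilate_vertex !shift_vertex.
  by congr (vertex _, vertex _); ring_nc.
exists (dilate (- t) * shift u)%g; first by rewrite groupM ?dilate_in_G ?shift_in_G.
rewrite /dmap /base_dart /= !permM !dilate_vertex !shift_vertex.
by congr (vertex _, vertex _); ring_nc.
Qed.

Lemma dart_01 : dart (vertex 0, vertex 1).
Proof. by rewrite /dart adj_vertex subr0 is_step_1. Qed.

Lemma iter_face_step_base k :
  iter k step base_dart = (vertex (- k%:R), vertex (- k%:R - 1)).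
Proof.
have := iter_face_step 0 k is_step_N1; rewrite add0r /base_dart => ->.
rewrite /face_pt rmorphN /= rmorph1 (negbTE Zn_N1one).
by congr (vertex _, vertex _); ring.
Qed.

Lemma base_face_edgesP E :
  E \in face_edges rot base_dart <-> exists x, E = [set vertex x; vertex (x + 1)].
Proof.
split=> [/imsetP[e /in_faceP[k ->] ->] | [x ->]].
  by exists (- k%:R - 1); rewrite iter_face_step_base setUC subrK.
apply/imsetP; exists (iter (nat_of_ord (- (x + 1))) step base_dart); first exact: in_face_iter.
by rewrite iter_face_step_base natr_Zp opprK /= setUC addrK.
Qed.

Lemma base_face_stab_dihedral (h : {perm V}) :
  (forall x, h @: [set vertex x; vertex (x + 1)] \in face_edges rot base_dart) ->
  exists b, (forall x, h (vertex x) = vertex (b + x)) \/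
            (forall x, h (vertex x) = vertex (b - x)).
Proof.
move=> h_edges; pose f x := label (h (vertex x)).
have hE x : h (vertex x) = vertex (f x) by rewrite /f labelK.
have f_inj : injective f by move=> x y /(can_inj labelK) /perm_inj /vertex_inj.
have f_step x : f (x + 1) - f x = 1 \/ f (x + 1) - f x = -1.
  have neq : vertex (f x) != vertex (f (x + 1)).
    apply: (contra_neq _ (oner_neq0 R)) => /vertex_inj/f_inj.
    by rewrite -{1}[x]addr0 => /addrI.
  have /base_face_edgesP[y] := h_edges x.
  rewrite imsetU1 imset_set1 !hE => /eq_set2 /(_ neq) [[e1 e2] | [e1 e2]]; [left | right];
    by rewrite (vertex_inj e1) (vertex_inj e2); ring.
have [b fE] := Zp_cycle_dihedral N_gt2 f_inj f_step.
by exists b; case: fE => fE; [left | right] => x; rewrite hE fE.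
Qed.

Lemma face_edge_pt u e E : is_step e ->
  E \in face_edges rot (vertex u, vertex (u + e)) ->
  exists a, E = [set vertex (face_pt u e a); vertex (face_pt u e (a + 1))].
Proof.
by move=> is_e /imsetP[_ /in_faceP[k ->] ->]; rewrite iter_face_step //; exists k%:R.
Qed.

Lemma vertex_b1n_neq b : vertex (b + 1 - nR) != vertex b.
Proof.
apply/eqP => /vertex_inj e; have : 1 - nR = 0 by apply: (eq_subr_eq0 e); ring.
by move/eqP; rewrite subr_eq0 eq_sym (negbTE nR_neq1).
Qed.

Lemma edge_not_on_neg_face b a :
  [set vertex (b + 1 - nR); vertex b] !=
  [set vertex (face_pt b (-1) a); vertex (face_pt b (-1) (a + 1))].
Proof.
have Fa x : face_pt b (-1) x = b - x.
  by rewrite /face_pt rmorphN /= rmorph1 (negbTE Zn_N1one); ring.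
rewrite !Fa; apply/eqP => /eq_set2 /(_ (vertex_b1n_neq b)).
case=> -[/vertex_inj Ea /vertex_inj Eb].
  have a_eq : a = -1 by apply/eqP; rewrite -addr_eq0; apply/eqP/(eq_subr_eq0 Eb); ring.
  have : - nR = 0 by apply: (eq_subr_eq0 Ea); rewrite a_eq; ring.
  by move/eqP; rewrite oppr_eq0 (negbTE nR_neq0).
have a_eq : a = 0 by apply: (eq_subr_eq0 Eb); ring.
have : 1 + 1 - nR = 0 by apply: (eq_subr_eq0 Ea); rewrite a_eq; ring.
by move/eqP; rewrite subr_eq0 eq_sym (negbTE nR_neq2).
Qed.

Lemma edge_not_on_pos_face b a :
  [set vertex (b + 1 - nR); vertex b] !=
  [set vertex (face_pt (b - 1) 1 a); vertex (face_pt (b - 1) 1 (a + 1))].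
Proof.
have Fx x : face_pt (b - 1) 1 x = b - 1 + x + cR * x * (x - 1).
  by rewrite /face_pt rmorph1 eqxx mulr1.
have redF x : red (face_pt (b - 1) 1 x) = red b - 1 + red x.
  by rewrite red_face_pt rmorphB /= rmorph1 mulr1.
have redX : red (b + 1 - nR) = red b + 1 by rewrite rmorphB rmorphD /= red_nR rmorph1 subr0.
apply/eqP => /eq_set2 /(_ (vertex_b1n_neq b)).
case=> -[/vertex_inj Ea /vertex_inj Eb].
  have : - red a = 0.
    by apply: (eq_subr_eq0 (congr1 red Eb)); rewrite redF rmorphD /= rmorph1; ring.
  move/eqP; rewrite oppr_eq0 => /eqP ra.
  have : 1 - (-1) = 0 :> 'Z_n.
    by apply: (eq_subr_eq0 (congr1 red Ea)); rewrite redX redF ra; ring.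
  by move/eqP; rewrite subr_eq0 (negbTE Zn_oneN1).
have : 1 - red a = 0 by apply: (eq_subr_eq0 (congr1 red Eb)); rewrite redF; ring.
move/eqP; rewrite subr_eq0 eq_sym => /eqP ra.
have [|t at1] := @red_eq0 (a - 1); first by rewrite rmorphB /= ra rmorph1 subrr.
have a_eq : a = 1 + nR * t by rewrite -at1 addrC subrK.
have : - (nR * t) = 0 by apply: (eq_subr_eq0 Eb); rewrite Fx a_eq; ring_nc.
move/eqP; rewrite oppr_eq0 => /eqP nt0.
have : - (nR + nR) = 0.
  by apply: (eq_subr_eq0 Ea); rewrite Fx a_eq nt0 addr0; ring_nc.
by move/eqP; rewrite oppr_eq0 (negbTE nR_double_neq0).
Qed.

(* The two edges [{b - 1, b}] and [{b, b + 1 - n}] meet at [b] but are not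
   consecutive in the rotation at [b], so no face contains both. *)
Lemma no_face_with_edges b d :
  [set vertex b; vertex (b - 1)] \in face_edges rot d ->
  [set vertex (b + 1 - nR); vertex b] \in face_edges rot d -> False.
Proof.
case/imsetP=> e de E1; rewrite -(face_edges_eq rot_inj de).
have neq : vertex b != vertex (b - 1).
  apply: (contra_neq _ (oner_neq0 R)) => /vertex_inj.
  by rewrite -{1}[b]addr0 => /addrI/eqP; rewrite eq_sym eqr_oppLR oppr0 => /eqP.
case: (eq_set2 E1 neq) (surjective_pairing e) => -[<- <-] ->.
  by case/(face_edge_pt is_step_N1)=> a /eqP; rewrite (negbTE (edge_not_on_neg_face _ _)).
rewrite -[X in (_, vertex X)](subrK 1 b).
by case/(face_edge_pt is_step_1)=> a /eqP; rewrite (negbTE (edge_not_on_pos_face _ _)).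
Qed.

Lemma reflection_not_face_preserving (h : {perm V}) b d :
  (forall x, h (vertex x) = vertex (b - x)) ->
  [set h @: (E : {set V}) | E in face_edges rot (vertex 0, vertex 1)] != face_edges rot d.
Proof.
move=> hE; apply/eqP => faces_h; apply: (@no_face_with_edges b d); rewrite -faces_h.
  apply/imsetP; exists [set vertex 0; vertex 1]; last by rewrite imsetU1 imset_set1 !hE subr0.
  by apply/imsetP; exists (vertex 0, vertex 1) => //; rewrite inE; apply: connect0.
apply/imsetP; exists [set vertex (-1 + nR); vertex 0]; last first.
  by rewrite imsetU1 imset_set1 !hE; congr [set vertex _; vertex _]; ring.
apply/imsetP; exists (iter N.-1 step (vertex 0, vertex 1)); first exact: in_face_iter.
have NE : (N.-1%:R : R) = -1.
  by apply/eqP; rewrite -subr_eq0 opprK natr1 prednK // natZN_eq0.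
have := iter_face_step 0 N.-1 is_step_1; rewrite add0r => ->.
rewrite NE /face_pt rmorph1 eqxx /=; congr [set vertex _; vertex _]; ring_nc.
Qed.

Lemma imset_permM (a g : {perm V}) (X : {set V}) : (a * g)%g @: X = g @: (a @: X).
Proof. by rewrite -imset_comp; apply: eq_imset => x; rewrite /= permM. Qed.

Lemma face_edges_G g d : g \in G -> dart d ->
  [set g @: (E : {set V}) | E in face_edges rot d] = face_edges rot (dmap g d).
Proof. by move=> gG; apply: face_edges_rot_aut (rot_aut_G gG); apply: adj_rot. Qed.

Lemma G_map_aut a : map_aut rot a -> a \in G.
Proof.
case=> a_adj a_faces; have [d' d'_dart faces_a] := a_faces _ dart_base.
have [g gG g_base] := dart_orbit_base d'_dart; have giG : (g^-1)%g \in G by rewrite groupV.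
have imset_gV (E : {set V}) : g^-1%g @: (g @: E) = E.
  by rewrite -imset_permM mulgV (eq_imset _ (@perm1 _)) imset_id.
have h_edges x : (a * g^-1)%g @: [set vertex x; vertex (x + 1)] \in face_edges rot base_dart.
  have : a @: [set vertex x; vertex (x + 1)] \in face_edges rot d'.
    by rewrite -faces_a imset_f // base_face_edgesP; exists x.
  rewrite -g_base -face_edges_G ?dart_base // => /imsetP[E E_base a_E].
  by rewrite imset_permM a_E imset_gV.
have [b [hE | hE]] := base_face_stab_dihedral h_edges.
  have -> : a = (shift b * g)%g.
    apply/permP => v; have [x ->] := vertex_surj v.
    by rewrite permM shift_vertex addrC -hE permM permKV.
  by rewrite groupM ?shift_in_G.
have [d1 d1_dart faces_d1] := a_faces _ dart_01.
case/negP: (reflection_not_face_preserving (dmap (g^-1)%g d1) hE).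
apply/eqP; rewrite -face_edges_G // -faces_d1 -[in RHS]imset_comp.
by apply: eq_imset => E; apply: imset_permM.
Qed.

Lemma shiftV_vertex b x : (shift b)^-1%g (vertex x) = vertex (x - b).
Proof. by rewrite -{1}[x](subrK b) -(shift_vertex b (x - b)) permK. Qed.

Lemma sigma2_conj_rot x w : adj (vertex x) w -> (sigma2 n m ^ shift x)%g w = rot (vertex x) w.
Proof.
have [y ->] := vertex_surj w; rewrite adj_vertex => is_yx.
rewrite conjgE !permM shiftV_vertex sigma2_vertex_step // shift_vertex.
by rewrite rot_vertex addrC.
Qed.

Lemma perm_iter_rot (a : {perm V}) v w k : (forall u, adj v u -> a u = rot v u) ->
  adj v w -> (a ^+ k)%g w = iter k (rot v) w.
Proof.
move=> a_rot vw; elim: k => [|k IH]; first by rewrite expg0 perm1.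
rewrite expgSr permM IH /= a_rot //.
by elim: k {IH} => //= k; apply: adj_rot.
Qed.

Lemma face_rotation_in_G d : dart d -> exists2 a, a \in G & dmap a d = step d.
Proof.
case/dart_vertex=> u [e [is_e ->]].
rewrite -[step _]/(iter 1 step _) iter_face_step // /face_pt.
case/is_step_cases: is_e => -[t -> red_e]; rewrite red_e ?eqxx ?(negbTE Zn_N1one).
  exists (sigma2 n m ^+ 2 * shift (1 + nR * t - nR * u))%g.
    by rewrite groupM ?shift_in_G ?groupX ?sigma2_in_G.
  rewrite /dmap /= !permM !sigma2_vertex !shift_vertex.
  by congr (vertex _, vertex _); ring_nc.
exists (shift (-1 + nR * t)); first exact: shift_in_G.
by rewrite /dmap /= !shift_vertex; congr (vertex _, vertex _); ring.
Qed.

Lemma rotary_rot : rotary rot.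
Proof.
split=> [v | d dd].
  have [x ->] := vertex_surj v; exists (sigma2 n m ^ shift x)%g; split.
  - by apply: map_aut_G; rewrite groupJ ?sigma2_in_G ?shift_in_G.
  - by rewrite conjgE !permM shiftV_vertex subrr sigma2_vertex0 shift_vertex add0r.
  move=> w w' xw xw'; have [k rot_k] := is_rotation_rot.2 _ _ _ xw xw'.
  by exists k; rewrite (perm_iter_rot _ (@sigma2_conj_rot x)).
have [a aG ad] := face_rotation_in_G dd.
have [stab trans] := rot_aut_face_rotation adj_rot rot_inj (rot_aut_G aG) dd ad.
by exists a; split=> //; apply: map_aut_G.
Qed.

Lemma not_reflexible_rot : ~ reflexible rot.
Proof.
case=> _ /(_ _ dart_base) [a [[a_adj a_faces] stab rev]].
have a_edges x : a @: [set vertex x; vertex (x + 1)] \in face_edges rot base_dart.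
  by rewrite -stab imset_f // base_face_edgesP; exists x.
have [b [aE | aE]] := base_face_stab_dihedral a_edges.
  have := row_step_in_face (rev _ (connect0 _ _)).
  rewrite /base_dart /= !aE /row_step /= !rmorphD /= rmorphN rmorph1 !rmorph0.
  have -> : red b + 0 - (red b - 1) = 1 by ring.
  by rewrite subr0 => /eqP; rewrite (negbTE Zn_oneN1).
have [d1 _ faces_d1] := a_faces _ dart_01.
by case/negP: (reflection_not_face_preserving d1 aE); apply/eqP.
Qed.

Lemma sigma1_sigma2_vertex x :
  (sigma1 n m * sigma2 n m)%g (vertex x) = vertex (- (x + 1) + cR * (x + 1) * x).
Proof. by rewrite permM sigma1_vertex sigma2_vertex addrK. Qed.

Lemma distinguished_sigma :
  distinguished rot (vertex 0) (vertex (-1)) base_dart (sigma1 n m) (sigma2 n m).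
Proof.
split; [exact: dart_base | by left | split | split | split].
- exact: map_aut_G sigma1_in_G.
- have base_step : step (dmap (sigma1 n m) base_dart) = base_dart.
    rewrite /dmap /base_dart /= !sigma1_vertex face_step_vertex addNr add0r subr0.
    by rewrite turn_1 ?add0r // red_nat.
  rewrite /face_stab face_edges_G ?sigma1_in_G ?dart_base //.
  have : in_face rot (dmap (sigma1 n m) base_dart) base_dart.
    by rewrite -{2}base_step; apply: fconnect1.
  by move/(face_edges_eq rot_inj)->.
- right=> e /in_faceP[k ->]; rewrite iter_face_step_base /= sigma1_vertex.
  by congr vertex; ring.
- exact: map_aut_G sigma2_in_G.
- exact: sigma2_vertex0.
- by left=> u /sigma2_conj_rot; rewrite /shift expg0 conjg1.
- apply/permP => v; have [x ->] := vertex_surj v.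
  by rewrite expgS expg1 perm1 permM !sigma1_sigma2_vertex; congr vertex; ring_nc.
- apply/eqP => /(congr1 (fun a : {perm V} => a (vertex 0))) /esym.
  rewrite perm1 sigma1_sigma2_vertex => /vertex_inj /eqP.
  by rewrite add0r mulr0 addr0 eq_sym oppr_eq0 oner_eq0.
- by rewrite sigma1_sigma2_vertex; congr vertex; ring.
by rewrite sigma1_sigma2_vertex; congr vertex; ring.
Qed.
End ChiralMap.

Theorem proposition4p2 (m s : nat) :
  odd m -> (3 <= m)%N -> (0 < s)%N ->
  exists rot : vtx (s * m) m -> vtx (s * m) m -> vtx (s * m) m,
    is_rotation rot /\ polytopal rot /\ chiral rot /\
    map_type rot (m * (s * m)) (2 * m) /\
    (forall a, map_aut rot a <->
       a \in <<[set sigma1 (s * m) m; sigma2 (s * m) m]>>%g) /\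
    (exists v w fd t1 t2,
       distinguished rot v w fd t1 t2 /\
       <<[set t1; t2]>>%g = <<[set sigma1 (s * m) m; sigma2 (s * m) m]>>%g).
Proof.
move=> m_odd m_ge3 s_gt0; exists (@rot m s).
split; first exact: is_rotation_rot.
split; first exact: polytopal_rot.
split; first by split; [exact: rotary_rot | exact: not_reflexible_rot].
split; first exact: map_type_rot.
split; first by move=> a; split; [exact: G_map_aut | exact: map_aut_G].
exists (@vertex m s 0), (@vertex m s (-1)), (@base_dart m s).
by exists (sigma1 (s * m) m), (sigma2 (s * m) m); split; first exact: distinguished_sigma.
Qed.
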